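(* Let $1\le m\le N$ be integers and let $(u_n)$ be a sequence of finite (real-valued) functions on $\Lambda^m$. Then there exists a finite function $U:\Lambda^N\to\mathbb R$ such that $G_{N,m}u_n\to U$ $d^Nx$-a.e. on $\Lambda^N$ if and only if there exists a finite function $u:\Lambda^m\to\mathbb R$ such that $u_n\to u$ $d^mx$-a.e. on $\Lambda^m$.
   Context: $(\Lambda;dx)$ is a complete $\sigma$-finite measure space with non-zero measure $dx$; for $k\in\mathbb N$, $d^kx$ denotes the completion of the product measure $dx^{\otimes k}$ on $\Lambda^k$, and ''a.e.'' on $\Lambda^k$ refers to $d^kx$. For integers $1\le m\le N$ and a function $u:\Lambda^m\to\mathbb R$ (not assumed symmetric or measurable), the generalized $N$-mean of order $m$ with kernel $u$ is $$(G_{N,m}u)(x_1,\dots,x_N)=\binom{N}{m}^{-1}\sum_{1\le i_1<\cdots<i_m\le N}u(x_{i_1},\dots,x_{i_m}).$$ *)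

From HB Require Import structures.
From mathcomp Require Import all_boot all_order all_algebra.
From mathcomp Require Import all_classical all_reals all_analysis.
Set Implicit Arguments. Unset Strict Implicit. Unset Printing Implicit Defensive.
Import Order.TTheory GRing.Theory Num.Theory numFieldNormedType.Exports.
Local Open Scope classical_set_scope.
Local Open Scope ring_scope.

(* d^k x-null sets of Lambda^k (= k.-tuple T): sets of outer product measure
   zero, i.e. coverable by countably many measurable rectangles
   B j 0 x ... x B j (k-1) with total product measure < e, for every e > 0.
   These are exactly the null sets of the completion of mu^{(x) k}. *)
Definition prod_null {d} {T : measurableType d} {R : realType}
  (mu : {measure set T -> \bar R}) (k : nat) (A : set (k.-tuple T)) : Prop :=
  forall e : R, 0 < e -> exists B : nat -> 'I_k -> set T,
    (forall j i, measurable (B j i)) /\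
    A `<=` \bigcup_j [set x | forall i, B j i (tnth x i)] /\
    (\sum_(j <oo) \prod_(i < k) mu (B j i) < e%:E)%E.

Definition ae_prod {d} {T : measurableType d} {R : realType}
  (mu : {measure set T -> \bar R}) (k : nat) (P : k.-tuple T -> Prop) : Prop :=
  exists E : set (k.-tuple T), prod_null mu E /\ forall x, ~ E x -> P x.

Definition incr_idx (m N : nat) (f : {ffun 'I_m -> 'I_N}) : bool :=
  [forall i : 'I_m, forall j : 'I_m, (i < j)%N ==> (f i < f j)%N].

Definition Gmean {T : Type} {R : realType} (N m : nat)
  (u : m.-tuple T -> R) (x : N.-tuple T) : R :=
  ('C(N, m)%:R)^-1 *
  \sum_(f : {ffun 'I_m -> 'I_N} | incr_idx f) u [tuple tnth x (f i) | i < m].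

(* If u_n -> u a.e. on Lambda^m, each term u_n (x_i1, ..., x_im) of G_{N,m} u_n
   converges off a null set of Lambda^N, because null sets pull back to null sets
   along coordinate projections (this is where sigma-finiteness enters); hence
   G_{N,m} u_n converges a.e.
   Conversely, work on Lambda^(N+m).  For every N-set W of coordinates,
   C(N,m) G_{N,m} u_n (x_W) is the sum of u_n (x_S) over the m-subsets S of W, and it
   converges a.e.  These window sums determine each u_n (x_S) as a fixed linear
   combination of them: for p in S, summing the windows p + (X - q) over q in X
   isolates (N - m) times the window sums of Q |-> u_n (x_(p+Q)), and induction on m
   applies.  So u_n (x_S) converges a.e.; for S the first m coordinates, the
   remaining N coordinates are integrated out, which needs mu Lambda <> 0. *)

From HB Require Import structures.
From mathcomp Require Import all_boot all_order all_algebra.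
From mathcomp Require Import all_classical all_reals all_analysis.
From mathcomp Require Import measurable_realfun.
Set Implicit Arguments. Unset Strict Implicit. Unset Printing Implicit Defensive.
Import Order.TTheory GRing.Theory Num.Theory numFieldNormedType.Exports.
Local Open Scope classical_set_scope.
Local Open Scope ring_scope.

(** * Sums over k-subsets *)

Section subspace_ksubset_sums.
Variables (K : numFieldType) (V : lmodType K) (C : V -> Prop).
Hypotheses (C0 : C 0) (CD : forall x y, C x -> C y -> C (x + y))
  (CZ : forall (c : K) x, C x -> C (c *: x)).

Lemma subspace_sum (I : Type) (r : seq I) (P : pred I) (F : I -> V) :
  (forall i, P i -> C (F i)) -> C (\sum_(i <- r | P i) F i).
Proof. exact: big_ind. Qed.

Lemma subspaceB x y : C x -> C y -> C (x - y).
Proof. by move=> Cx Cy; rewrite -scaleN1r; apply/CD/CZ. Qed.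

Variable I : finType.
Implicit Types (D S W X Y : {set I}) (a : {set I} -> V).

Definition ksubset_sum k W a := \sum_(S : {set I} | (S \subset W) && (#|S| == k)) a S.

Lemma sum_ksubset_sum_setD1 k X a :
  \sum_(q in X) ksubset_sum k (X :\ q) a = ksubset_sum k X a *+ (#|X| - k).
Proof.
rewrite /ksubset_sum.
rewrite (exchange_big_dep (fun S : {set I} => (S \subset X) && (#|S| == k))) /=.
  rewrite -sumrMnl; apply: eq_bigr => S /andP[SX /eqP cardS].
  rewrite sumr_const; congr (_ *+ _).
  rewrite -cardS -[in RHS](finset.setIidPr SX) -cardsD.
  apply: eq_card => q; rewrite -topredE /= !inE subsetD1 SX cardS eqxx andbT.
  by rewrite andTb andbC.
by move=> q S _ /andP[/subsetD1P[SX _] ->]; rewrite SX.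
Qed.

Lemma ksubset_sum_setU1 k p Y a : p \notin Y ->
  ksubset_sum k.+1 (p |: Y) a =
  ksubset_sum k Y (fun Q => a (p |: Q)) + ksubset_sum k.+1 Y a.
Proof.
move=> pY; have subU1 S : p \notin S -> (S \subset p |: Y) = (S \subset Y).
  by move=> pS; rewrite -{2}(finset.setU1K pY) subsetD1 pS andbT.
rewrite /ksubset_sum (bigID (fun S : {set I} => p \in S)) /=; congr (_ + _).
  rewrite (reindex_onto (fun Q => p |: Q) (fun S => S :\ p)) /=; last first.
    by move=> S /andP[_ pS]; rewrite finset.setD1K.
  apply: eq_bigl => Q; rewrite setU11 andbT.
  have [pQ|pQ] := boolP (p \in Q).
    rewrite (_ : Q \subset Y = false) ?andbF; last first.
      by apply: contraNF pY => /fintype.subsetP; apply.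
    rewrite andbC /=; apply/negbTE.
    by apply: contraL pQ => /andP[/eqP <- _]; rewrite setD11.
  rewrite finset.setU1K // eqxx andbT cardsU1 pQ eqSS.
  by rewrite finset.subUset finset.sub1set setU11 subU1.
apply: eq_bigl => S; rewrite -andbA (andbC _ (p \notin S)) andbA.
by rewrite -subsetD1 finset.setU1K.
Qed.

Lemma sum_ksubset_sum_setU1D1 k p X a : p \notin X ->
  \sum_(q in X) ksubset_sum k.+1 (p |: (X :\ q)) a =
  ksubset_sum k X (fun Q => a (p |: Q)) *+ (#|X| - k) +
  ksubset_sum k.+1 X a *+ (#|X| - k.+1).
Proof.
move=> pX; rewrite -!sum_ksubset_sum_setD1 -big_split /=.
apply: eq_bigr => q _; apply: ksubset_sum_setU1.
by apply: contra pX => /setD1P[].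
Qed.

Lemma exists_ksubset k D :
  (k <= #|D|)%N -> exists2 W : {set I}, W \subset D & #|W| = k.
Proof.
rewrite -bin_gt0 -cards_draws card_gt0 => /set0Pn[W].
by rewrite inE => /andP[WD /eqP cardW]; exists W.
Qed.

Lemma subspaceMn_inv x n : (0 < n)%N -> C (x *+ n) -> C x.
Proof.
move=> n_gt0 /(CZ (n%:R)^-1); rewrite -[x *+ n]scaler_nat scalerA mulVf ?scale1r //.
by rewrite pnatr_eq0 -lt0n.
Qed.

Lemma ksubset_sum_subspace_inv N m D a : (m <= N)%N -> (m + N <= #|D|)%N ->
  (forall W, W \subset D -> #|W| = N -> C (ksubset_sum m W a)) ->
  forall S, S \subset D -> #|S| = m -> C (a S).
Proof.
elim: m D a => [|m IH] D a leN cardD CW S SD cardS.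
  have [W WD cardW] := @exists_ksubset N D cardD.
  move/eqP: cardS; rewrite cards_eq0 => /eqP ->.
  have := CW W WD cardW; rewrite /ksubset_sum (big_pred1 finset.set0) // => Q /=.
  by rewrite cards_eq0; case: eqP => [->|]; rewrite ?finset.sub0set ?andbF.
have /set0Pn[p pS] : S != finset.set0 by rewrite -card_gt0 cardS.
have pD : p \in D := fintype.subsetP SD p pS.
rewrite -(finset.setD1K pS); apply: (IH (D :\ p) (fun Q => a (p |: Q))).
- exact: ltnW.
- by move: cardD; rewrite (cardsD1 p D) pD addSn add1n ltnS.
- move=> X XD cardX.
  have XD' : X \subset D := fintype.subset_trans XD (subD1set D p).
  have pX : p \notin X by apply: contraL pD => /(fintype.subsetP XD); rewrite setD11.
  apply: (@subspaceMn_inv _ (N - m)); first by rewrite subn_gt0.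
  have -> : ksubset_sum m X (fun Q => a (p |: Q)) *+ (N - m) =
      \sum_(q in X) ksubset_sum m.+1 (p |: (X :\ q)) a -
      ksubset_sum m.+1 X a *+ (N - m.+1).
    by rewrite sum_ksubset_sum_setU1D1 // cardX addrK.
  apply: subspaceB.
    apply: subspace_sum => q qX; apply: CW.
      rewrite finset.subUset finset.sub1set pD.
      exact: fintype.subset_trans (subD1set X q) XD'.
    rewrite cardsU1 (contra (fintype.subsetP (subD1set X q) p)) //.
    by rewrite -cardX (cardsD1 q X) qX.
  by rewrite -scaler_nat; apply/CZ/CW.
- exact: finset.setSD.
- by move: cardS; rewrite (cardsD1 p S) pS => -[].
Qed.
End subspace_ksubset_sums.

Lemma cvg_ksubset_sum_inv (R : realType) (I : finType) N m (D : {set I})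
    (a : {set I} -> nat -> R) : (m <= N)%N -> (m + N <= #|D|)%N ->
  (forall W : {set I}, W \subset D -> #|W| = N ->
    cvg ((fun n => \sum_(S : {set I} | (S \subset W) && (#|S| == m)) a S n) @ \oo)) ->
  forall S : {set I}, S \subset D -> #|S| = m -> cvg (a S @ \oo).
Proof.
move=> leN cardD cvgW.
apply: (@ksubset_sum_subspace_inv _ _ (fun s : R^nat => cvg (s @ \oo))) leN cardD _.
- exact: is_cvg_cst.
- by move=> s1 s2; apply: is_cvgD.
- by move=> c s; apply: is_cvgZl_tmp.
- by move=> W WD cardW; rewrite /ksubset_sum fct_sumE; apply: cvgW.
Qed.

(** * Subtuples along increasing index maps *)

Definition tsub (T : Type) (k M : nat) (g : 'I_k -> 'I_M) (x : M.-tuple T) :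
  k.-tuple T := [tuple tnth x (g i) | i < k].

Lemma tsub_comp (T : Type) (k l M : nat) (g : 'I_k -> 'I_l) (h : 'I_l -> 'I_M)
  (x : M.-tuple T) : tsub g (tsub h x) = tsub (h \o g) x.
Proof. by apply: eq_from_tnth => i; rewrite !tnth_map !tnth_ord_tuple. Qed.

Lemma tsub_id (T : Type) (k : nat) (g : 'I_k -> 'I_k) (x : k.-tuple T) :
  g =1 id -> tsub g x = x.
Proof. by move=> gE; apply: eq_from_tnth => i; rewrite tnth_map tnth_ord_tuple gE. Qed.

Lemma incr_idxP (k M : nat) (f : {ffun 'I_k -> 'I_M}) :
  reflect {homo f : i j / (i < j)%N} (incr_idx f).
Proof.
apply: (iffP forallP) => [incr_f i j ij|incr_f i].
  by have /forallP/(_ j)/implyP := incr_f i; apply.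
by apply/forallP => j; apply/implyP; apply: incr_f.
Qed.

Section ordinal_subsets.
Variable M : nat.
Implicit Types (A S W : {set 'I_M}).

Lemma incr_inj k (g : 'I_k -> 'I_M) : {homo g : i j / (i < j)%N} -> injective g.
Proof. by move=> /le_mono; apply: inc_inj. Qed.

Lemma incr_mono k (g : 'I_k -> 'I_M) :
  {homo g : i j / (i < j)%N} -> {mono g : i j / (i < j)%N}.
Proof. by move=> /le_mono gmono i j; rewrite !ltnNge; congr negb; exact: gmono. Qed.

Lemma sorted_enum_set A : sorted ltn (map val (enum A)).
Proof.
rewrite -[enum _](eq_filter (mem_enum _)) -(eq_filter (mem_map val_inj _)).
by rewrite -filter_map (sorted_filter ltn_trans) // unlock val_ord_enum iota_ltn_sorted.
Qed.

(* The elements of A in increasing order; the default x0 only matters when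
   #|A| <> k. *)
Definition set_enum k (x0 : 'I_M) A : 'I_k -> 'I_M := fun i => nth x0 (enum A) i.
Arguments set_enum : clear implicits.

Lemma mem_set_enum k x0 A i : #|A| = k -> set_enum k x0 A i \in A.
Proof. by move=> cardA; rewrite -mem_enum mem_nth // -cardE cardA. Qed.

Lemma set_enum_incr k x0 A : #|A| = k -> {homo set_enum k x0 A : i j / (i < j)%N}.
Proof.
move=> cardA i j ij; have sizeA : size (enum A) = k by rewrite -cardE.
rewrite /set_enum -!(nth_map x0 (val x0)) ?sizeA //.
apply: (sorted_ltn_nth ltn_trans); rewrite ?inE ?size_map ?sizeA //.
exact: sorted_enum_set.
Qed.

Lemma imset_set_enum k x0 A : #|A| = k -> [set set_enum k x0 A i | i : 'I_k] = A.
Proof.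
move=> cardA; apply/eqP; rewrite eqEcard card_imset; last first.
  exact/incr_inj/set_enum_incr.
rewrite card_ord cardA leqnn andbT; apply/fintype.subsetP => _ /imsetP[i _ ->].
exact: mem_set_enum.
Qed.

Lemma set_enum_imset k x0 (g : 'I_k -> 'I_M) :
  {homo g : i j / (i < j)%N} -> set_enum k x0 [set g i | i : 'I_k] = g.
Proof.
move=> incr_g; have : map val (enum [set g i | i : 'I_k]) = map val (map g (enum 'I_k)).
  apply: (irr_sorted_eq ltn_trans ltnn); first exact: sorted_enum_set.
    rewrite -map_comp sorted_map.
    have := iota_ltn_sorted 0 k; rewrite -val_enum_ord sorted_map.
    exact: sub_sorted.
  move=> n; rewrite -map_comp; apply/mapP/mapP => [[y + ->]|[i _ ->]].
    by rewrite mem_enum => /imsetP[i _ ->]; exists i; rewrite ?mem_enum.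
  by exists (g i); rewrite // mem_enum imset_f.
move/(inj_map val_inj) => enumE; apply/funext => i.
by rewrite /set_enum enumE (nth_map i) ?size_enum_ord // nth_ord_enum.
Qed.

Lemma sum_incr_ksubsets (V : nmodType) N m x0 W (F : ('I_m -> 'I_M) -> V) :
  #|W| = N ->
  \sum_(f : {ffun 'I_m -> 'I_N} | incr_idx f) F (set_enum N x0 W \o f) =
  \sum_(S : {set 'I_M} | (S \subset W) && (#|S| == m)) F (set_enum m x0 S).
Proof.
move=> cardW; set gW := set_enum N x0 W; have incr_gW := set_enum_incr x0 cardW.
pose phi (f : {ffun 'I_m -> 'I_N}) := [set gW (f i) | i : 'I_m].
have incr_gWf f : incr_idx f -> {homo gW \o f : i j / (i < j)%N}.
  by move=> /incr_idxP incr_f i j ij; apply/incr_gW/incr_f.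
have phiK f : incr_idx f -> set_enum m x0 (phi f) = gW \o f.
  by move=> /incr_gWf; apply: set_enum_imset.
symmetry; rewrite (eq_bigl (fun S => S \in phi @: [set f | incr_idx f]%SET)) => [|S].
  rewrite big_imset /=; last first.
    move=> f1 f2; rewrite !inE => incr_f1 incr_f2 /(congr1 (set_enum m x0)).
    rewrite !phiK // => e12; apply/ffunP => i; apply: (incr_inj incr_gW).
    exact: (congr1 (fun g => g i) e12).
  by apply: eq_big => f; rewrite inE // => /phiK ->.
symmetry; apply/imsetP/andP => [[f]|[SW /eqP cardS]].
  rewrite inE => /incr_gWf/incr_inj inj_gWf ->; split.
    by apply/fintype.subsetP => _ /imsetP[i _ ->]; apply: mem_set_enum.
  by rewrite card_imset // card_ord.
have /fin_all_exists[f0 f0E] : forall i, exists j, gW j = set_enum m x0 S i.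
  move=> i; have := mem_set_enum x0 i cardS.
  move/(fintype.subsetP SW); rewrite -(imset_set_enum x0 cardW).
  by case/imsetP => j _ ->; exists j.
exists (finfun f0); rewrite ?inE.
  apply/incr_idxP => i j ij; rewrite !ffunE -(incr_mono incr_gW) -/gW !f0E.
  exact: set_enum_incr.
rewrite -[LHS](imset_set_enum x0 cardS); apply: eq_imset => i.
by rewrite ffunE f0E.
Qed.

Lemma Gmean_tsub_set_enum (T : Type) (R : realType) N m x0 W
    (v : m.-tuple T -> R) (x : M.-tuple T) : (m <= N)%N -> #|W| = N ->
  'C(N, m)%:R * Gmean v (tsub (set_enum N x0 W) x) =
  \sum_(S : {set 'I_M} | (S \subset W) && (#|S| == m)) v (tsub (set_enum m x0 S) x).
Proof.
move=> leN cardW; rewrite /Gmean mulrA mulfV ?mul1r ?pnatr_eq0 -?lt0n ?bin_gt0 //.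
rewrite -(sum_incr_ksubsets x0 (fun g => v (tsub g x)) cardW).
by apply: eq_bigr => f _; rewrite -tsub_comp.
Qed.

End ordinal_subsets.
Arguments set_enum {M} k x0 A.

(** * Null sets of finite products *)

Lemma nneseries_bij_pair (R : realType) (c : nat -> nat -> \bar R)
  (f : nat -> nat * nat) : set_bij setT setT f -> (forall i j, 0 <= c i j)%E ->
  (\sum_(n <oo) c (f n).1 (f n).2 = \sum_(i <oo) \sum_(j <oo) c i j)%E.
Proof.
move=> bij_f c_ge0; rewrite nneseries_esumT //.
rewrite -(reindex_esum setT setT f (fun p => c p.1 p.2)) //.
rewrite -setXTT -[setT `*` setT]/(setT `*`` fun=> setT) -esum_esum //.
rewrite nneseries_esumT; last by move=> i; apply: nneseries_ge0.
by apply: eq_esum => i _; rewrite nneseries_esumT.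
Qed.

Section product_null_sets.
Context d (T : measurableType d) (R : realType) (mu : {measure set T -> \bar R}).

(* Cover E l with total measure below e / 2^(l+2) and merge the covers along a
   bijection nat ~ nat * nat. *)
Lemma prod_null_bigcup k (E : nat -> set (k.-tuple T)) :
  (forall l, prod_null mu (E l)) -> prod_null mu (\bigcup_l E l).
Proof.
move=> nullE e e_gt0.
pose cover l (B : nat -> 'I_k -> set T) := [/\ forall j i, measurable (B j i),
  E l `<=` \bigcup_j [set x | forall i, B j i (tnth x i)] &
  (\sum_(j <oo) \prod_(i < k) mu (B j i) < (e / 2 / (2 ^ l.+1)%:R)%:E)%E].
have [G coverG] : {G : nat -> nat -> 'I_k -> set T & forall l, cover l (G l)}.
  apply: (@choice _ _ cover) => l.
  have [|B [mB [EB sumB]]] := nullE l (e / 2 / (2 ^ l.+1)%:R).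
    by rewrite !divr_gt0 // ltr0n expn_gt0.
  by exists B; split.
have /card_esym/ppcard_eqP[f] := card_nat2.
exists (fun n => G (f n).1 (f n).2); split.
  by move=> n i; case: (coverG (f n).1).
split.
  move=> x [l _ Elx]; case: (coverG l) => _ /(_ x Elx)[j _ Gx] _.
  by exists (f^-1%FUN (l, j)) => //=; rewrite invK ?inE.
rewrite (@nneseries_bij_pair _ (fun l j => \prod_(i < k) mu (G l j i))%E _ 'bij_f) //;
  last by move=> l j; apply: prode_ge0.
apply: (@le_lt_trans _ _ (e / 2)%:E);
  last by rewrite lte_fin ltr_pdivrMr // ltr_pMr // ltr1n.
apply: le_trans (epsilon_trick0 xpredT _); last by rewrite divr_ge0 // ltW.
apply: lee_nneseries => [l _ _|l _].
  by apply: nneseries_ge0 => j _ _; apply: prode_ge0.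
by case: (coverG l) => _ _ /ltW.
Qed.

Lemma ae_prodS k (P Q : k.-tuple T -> Prop) :
  (forall x, P x -> Q x) -> ae_prod mu P -> ae_prod mu Q.
Proof. by move=> PQ [E [nullE PE]]; exists E; split=> // x /PE /PQ. Qed.

(* For k = 0 no nonempty set is null: the empty product of measures is 1. *)
Lemma ae_prodW k (P : k.-tuple T -> Prop) :
  (0 < k)%N -> (forall x, P x) -> ae_prod mu P.
Proof.
case: k P => // k P _ allP; exists set0; split=> // e e_gt0.
exists (fun _ _ => set0); split=> //; split; first by move=> x [].
by rewrite big_ord_recl measure0 mul0e eseries0.
Qed.

Lemma ae_prodI k (P Q : k.-tuple T -> Prop) :
  ae_prod mu P -> ae_prod mu Q -> ae_prod mu (fun x => P x /\ Q x).
Proof.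
move=> [E1 [null1 PE1]] [E2 [null2 QE2]].
exists (\bigcup_l (if l == 0%N then E1 else E2)); split.
  by apply: prod_null_bigcup => -[|l].
by move=> x nEx; split; [apply: PE1 | apply: QE2] => Ex; apply: nEx;
  [exists 0%N | exists 1%N].
Qed.

Lemma ae_prod_forall k (I : finType) (P : I -> k.-tuple T -> Prop) :
  (0 < k)%N -> (forall i, ae_prod mu (P i)) -> ae_prod mu (fun x => forall i, P i x).
Proof.
move=> k_gt0 aeP; suff : ae_prod mu (fun x => forall i, i \in enum I -> P i x).
  by apply: ae_prodS => x Px i; apply: Px; rewrite mem_enum.
elim: (enum I) => [|i s IHs]; first exact: ae_prodW.
apply: ae_prodS (ae_prodI (aeP i) IHs) => x [Pix Psx] j.
by rewrite inE => /orP[/eqP ->|/Psx].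
Qed.

Hypothesis mu_sfin : sigma_finite [set: T] mu.

(* On the part where the inserted coordinate lies in the l-th piece F l of a
   sigma-finite exhaustion, insert the factor F l into the rectangles of a cover;
   this multiplies its measure by the finite number mu (F l). *)
Lemma ae_prod_tsub_lift k (p : 'I_k.+1) (P : k.-tuple T -> Prop) :
  ae_prod mu P -> ae_prod mu (fun x => P (tsub (lift p) x)).
Proof.
move=> [E [nullE PE]]; have [F FT mF] := mu_sfin.
exists (\bigcup_l [set x | E (tsub (lift p) x) /\ F l (tnth x p)]); split; last first.
  move=> x nEx; apply: PE => Ex; apply: nEx.
  have : [set: T] (tnth x p) by [].
  by rewrite FT => -[l _ Fl]; exists l.
apply: prod_null_bigcup => l e e_gt0; have [mFl Fl_fin] := mF l.
pose c := fine (mu (F l)).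
have cE : c%:E = mu (F l) by rewrite fineK // ge0_fin_numE.
have c_ge0 : 0 <= c by rewrite -lee_fin cE.
have [|B [mB [EB sumB]]] := nullE (e / (c + 1)); first by rewrite divr_gt0 // ltr_wpDl.
pose B' j i := if unlift p i is Some i' then B j i' else F l.
exists B'; split; first by move=> j i; rewrite /B'; case: (unlift p i).
split.
  move=> x [/EB[j _ Bx] Flx]; exists j => // i; rewrite /B'.
  by case: unliftP => [i' ->|-> //]; have := Bx i'; rewrite tnth_map tnth_ord_tuple.
have prodB' j : (\prod_(i < k.+1) mu (B' j i) = c%:E * \prod_(i < k) mu (B j i))%E.
  rewrite (bigD1_ord p) //= /B' unlift_none cE; congr (_ * _)%E.
  by apply: eq_bigr => i _; rewrite liftK.
rewrite (eq_eseriesr (fun j _ => prodB' j)) nneseriesZl; last first.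
  by move=> j _; apply: prode_ge0.
apply: (@le_lt_trans _ _ (c%:E * (e / (c + 1))%:E)%E).
  by apply: lee_wpmul2l; [rewrite lee_fin | apply: ltW].
rewrite -EFinM lte_fin mulrA ltr_pdivrMr ?ltr_wpDl // mulrC ltr_pM2l //.
by rewrite ltrDl.
Qed.

Lemma ae_prod_tsub_incr k M (P : k.-tuple T -> Prop) (g : 'I_k -> 'I_M) :
  {homo g : i j / (i < j)%N} -> ae_prod mu P -> ae_prod mu (fun x => P (tsub g x)).
Proof.
move=> incr_g aeP; have kM : (k <= M)%N.
  by have := leq_card g (incr_inj incr_g); rewrite !card_ord.
move: g incr_g; rewrite -(subnK kM); elim: (M - k)%N => [|n IH] g incr_g.
  apply: ae_prodS aeP => x; rewrite tsub_id //.
  exact: (Order.mono_unique le_total (leqnn _) (le_mono incr_g) (fun _ _ => erefl)).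
have [p pg] : exists p, p \notin codom g.
  apply/existsP; rewrite -negb_forall; apply/negP => /forallP allg.
  have : (#|'I_(n.+1 + k)| <= #|codom g|)%N.
    by apply/subset_leq_card/fintype.subsetP => q _; apply: allg.
  by rewrite card_codom ?card_ord ?addSn ?ltnNge ?leq_addl //; apply: incr_inj.
have /fin_all_exists[g' g'E] : forall i, exists j, lift p j = g i.
  move=> i; have [|j gE _] := @unlift_some _ p (g i); last by exists j.
  by apply: contraNneq pg => ->; apply: codom_f.
have incr_g' : {homo g' : i j / (i < j)%N}.
  by move=> i j ij; have := incr_g _ _ ij; rewrite -!g'E /= !ltnNge leq_bump2.
apply: ae_prodS (ae_prod_tsub_lift p (IH g' incr_g')) => x.
by rewrite tsub_comp (_ : lift p \o g' = g) //; apply/funext => i; rewrite /= g'E.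
Qed.

Lemma exists_lt_of_integral_lt (f : T -> \bar R) (e : R) : 0 <= e ->
  measurable_fun setT f -> (forall t, 0 <= f t)%E ->
  (\int[mu]_t f t < e%:E * mu setT)%E -> exists t, (f t < e%:E)%E.
Proof.
move=> e_ge0 mf f_ge0 intf; apply/not_existsP => fe; move: intf; apply/negP.
rewrite -leNgt -integral_cst //; apply: ge0_le_integral => // t _.
by rewrite leNgt; apply/negP/fe.
Qed.

Hypothesis mu_nz : mu [set: T] != 0%E.

(* A cover of the exceptional set in Lambda^(k+1) is sliced at a last coordinate t
   whose fibre has measure < e; such t exists since the fibre measures integrate
   to less than e * mu setT. *)
Lemma ae_prod_tsub_widen1 k (Q : k.-tuple T -> Prop) : (0 < k)%N ->
  ae_prod mu (fun x : k.+1.-tuple T => Q (tsub (widen_ord (leqnSn k)) x)) ->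
  ae_prod mu Q.
Proof.
move=> k_gt0 [E [nullE QE]]; exists [set w | ~ Q w]; split; last first.
  by move=> w /contrapT.
move=> e e_gt0.
have [r r_gt0 r_le] : exists2 r : R, 0 < r & (r%:E <= mu setT)%E.
  have : (0 < mu [set: T])%E by rewrite lt0e mu_nz measure_ge0.
  case: (mu setT) => [r||//]; first by rewrite lte_fin => r_gt0; exists r.
  by exists 1; rewrite ?leey.
have [B [mB [EB sumB]]] := nullE (e * r) (mulr_gt0 e_gt0 r_gt0).
pose rho j := (\prod_(i < k) mu (B j (widen_ord (leqnSn k) i)))%E.
have rho_ge0 j : (0 <= rho j)%E by apply: prode_ge0.
pose f j t := (rho j * (\1_(B j ord_max) t)%:E)%E.
have f_ge0 j t : (0 <= f j t)%E by rewrite mule_ge0 // lee_fin.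
have mf j : measurable_fun setT (f j).
  apply: measurable_funeM; apply/measurable_EFinP.
  exact: measurable_indic.
have intf j : (\int[mu]_t f j t = \prod_(i < k.+1) mu (B j i))%E.
  rewrite ge0_integralZl //; last by apply/measurable_EFinP; apply: measurable_indic.
  by rewrite integral_indic // setIT big_ord_recr /= muleC.
have [t ft] : exists t, (\sum_(j <oo) f j t < e%:E)%E.
  apply: exists_lt_of_integral_lt; first exact: ltW.
  - exact: ge0_emeasurable_sum.
  - by move=> t; apply: nneseries_ge0.
  rewrite integral_nneseries // (eq_eseriesr (fun j _ => intf j)).
  apply: (lt_le_trans sumB); rewrite EFinM; apply: lee_wpmul2l => //.
  by rewrite lee_fin ltW.
exists (fun j i => if `[< B j ord_max t >] then B j (widen_ord (leqnSn k) i) else set0).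
split; first by move=> j i; case: ifP.
split.
  move=> w /= nQw; pose x := [tuple of rcons w t].
  have xE : tsub (widen_ord (leqnSn k)) x = w.
    apply: eq_from_tnth => i; rewrite tnth_map tnth_ord_tuple.
    by rewrite !(tnth_nth t) /= nth_rcons size_tuple ltn_ord.
  have [|j _ Bx] := EB x.
    by apply: contrapT => nEx; apply/nQw; rewrite -xE; apply: QE.
  have Bt : B j ord_max t.
    by have := Bx ord_max; rewrite (tnth_nth t) nth_rcons size_tuple ltnn eqxx.
  exists j => // i; rewrite asboolT //; have := Bx (widen_ord (leqnSn k) i).
  by rewrite !(tnth_nth t) /= nth_rcons size_tuple ltn_ord.
apply: le_lt_trans ft; apply: lee_nneseries => [j _ _|j _]; first exact: prode_ge0.
rewrite /f indicE; case: (pselect (B j ord_max t)) => Bt.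
  by rewrite asboolT // mem_set // mule1.
by rewrite asboolF // (bigD1 (Ordinal k_gt0)) //= measure0 mul0e mule_ge0 ?lee_fin.
Qed.

Lemma ae_prod_tsub_widen k M (kM : (k <= M)%N) (Q : k.-tuple T -> Prop) :
  (0 < k)%N -> ae_prod mu (fun x : M.-tuple T => Q (tsub (widen_ord kM) x)) ->
  ae_prod mu Q.
Proof.
move=> k_gt0; elim: M kM => [|M IH] kM; first by case: k k_gt0 Q kM.
have [kM'|Mk] := leqP k M.
  move=> aeQ; apply: (IH kM'); apply: ae_prod_tsub_widen1; first exact: leq_trans kM'.
  apply: ae_prodS aeQ => x; rewrite tsub_comp.
  by rewrite (_ : _ \o _ = widen_ord kM) //; apply/funext => i; apply: val_inj.
have eMk : M.+1 = k by apply/eqP; rewrite eqn_leq Mk.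
subst k; apply: ae_prodS => x; rewrite tsub_id //.
by move=> i; apply: val_inj.
Qed.

End product_null_sets.

(** * Generalized means *)

Section generalized_means.
Context d (T : measurableType d) (R : realType) (mu : {measure set T -> \bar R}).
Hypothesis mu_sfin : sigma_finite [set: T] mu.
Variables (N m : nat) (u : nat -> m.-tuple T -> R).

Lemma ae_cvg_Gmean (v : m.-tuple T -> R) : (0 < N)%N ->
  ae_prod mu (fun y => (fun n => u n y) @ \oo --> v y) ->
  ae_prod mu (fun x : N.-tuple T => (fun n => Gmean (u n) x) @ \oo --> Gmean v x).
Proof.
move=> N_gt0 aev.
have aeu : ae_prod mu (fun x : N.-tuple T => forall f : {ffun 'I_m -> 'I_N},
    incr_idx f -> (fun n => u n (tsub f x)) @ \oo --> v (tsub f x)).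
  apply: ae_prod_forall => [//|f].
  have [/incr_idxP incr_f|/negP nf] := boolP (incr_idx f).
    by apply: ae_prodS (ae_prod_tsub_incr mu_sfin incr_f aev) => x cvg_u _.
  by apply: ae_prodW => // x /nf.
apply: ae_prodS aeu => x cvg_u; apply: cvgM; first exact: cvg_cst.
by apply: cvg_big => [|f /cvg_u //]; apply: add_continuous.
Qed.

Lemma cvg_tsub_of_cvg_windows M x0 (x : M.-tuple T) : (m <= N)%N -> (m + N <= M)%N ->
  (forall W : {set 'I_M}, #|W| = N ->
    cvg ((fun n => Gmean (u n) (tsub (set_enum N x0 W) x)) @ \oo)) ->
  forall S : {set 'I_M}, #|S| = m ->
    cvg ((fun n => u n (tsub (set_enum m x0 S) x)) @ \oo).
Proof.
move=> leN leM cvgW S cardS.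
apply: (cvg_ksubset_sum_inv (D := [set: 'I_M]%SET)
  (a := fun S n => u n (tsub (set_enum m x0 S) x)) leN) => //.
- by rewrite cardsT card_ord.
- move=> W _ cardW.
  under eq_fun => n do rewrite -(Gmean_tsub_set_enum x0 (u n) x leN cardW).
  exact: is_cvgZl_tmp (cvgW W cardW).
Qed.

Hypothesis mu_nz : mu [set: T] != 0%E.

Lemma ae_cvg_of_cvg_Gmean : (0 < m)%N -> (m <= N)%N ->
  ae_prod mu (fun x : N.-tuple T => cvg ((fun n => Gmean (u n) x) @ \oo)) ->
  ae_prod mu (fun y : m.-tuple T => cvg ((fun n => u n y) @ \oo)).
Proof.
move=> m_gt0 leN aeG; have M_gt0 : (0 < N + m)%N by rewrite addn_gt0 m_gt0 orbT.
pose x0 : 'I_(N + m) := Ordinal M_gt0.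
have aeW : ae_prod mu (fun x : (N + m).-tuple T =>
    forall W : {set 'I_(N + m)}, #|W| = N ->
    cvg ((fun n => Gmean (u n) (tsub (set_enum N x0 W) x)) @ \oo)).
  apply: ae_prod_forall => // W; have [cardW|/eqP nW] := eqVneq #|W| N.
    by apply: ae_prodS (ae_prod_tsub_incr mu_sfin (set_enum_incr x0 cardW) aeG) => x ? _.
  by apply: ae_prodW => // x /nW.
apply: (ae_prod_tsub_widen (kM := leq_addl N m) mu_nz m_gt0).
apply: ae_prodS aeW => x /cvg_tsub_of_cvg_windows cvgS.
have incr_w : {homo widen_ord (leq_addl N m) : i j / (i < j)%N} by [].
rewrite -(set_enum_imset x0 incr_w); apply: cvgS => //; first by rewrite addnC.
by rewrite card_imset ?card_ord //; apply: incr_inj.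
Qed.

End generalized_means.

Theorem theorem1 (d : measure_display) (T : measurableType d) (R : realType)
  (mu : {measure set T -> \bar R})
  (mu_complete : measure_is_complete mu)
  (mu_sfin : sigma_finite [set: T] mu)
  (mu_nz : mu [set: T] != 0%E)
  (m N : nat) (hm : (1 <= m)%N) (hmN : (m <= N)%N)
  (u : nat -> m.-tuple T -> R) :
  (exists U : N.-tuple T -> R,
     ae_prod mu (fun x : N.-tuple T => (fun n => Gmean (u n) x) @ \oo --> U x))
  <->
  (exists v : m.-tuple T -> R,
     ae_prod mu (fun y : m.-tuple T => (fun n => u n y) @ \oo --> v y)).
Proof.
split=> [[U aeU]|[v aev]]; last first.
  by exists (Gmean v); apply: (ae_cvg_Gmean mu_sfin (leq_trans hm hmN) aev).
have aeG : ae_prod mu (fun x : N.-tuple T => cvg ((fun n => Gmean (u n) x) @ \oo)).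
  by apply: ae_prodS aeU => x /cvgP.
have aev := ae_cvg_of_cvg_Gmean mu_sfin mu_nz hm hmN aeG.
by exists (fun y => lim ((fun n => u n y) @ \oo)).
Qed.
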